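(* Let $PS$ be a finite set of propositional symbols and let $W = \{\langle \phi_1, k_1\rangle, \ldots, \langle \phi_n, k_n\rangle\}$ be a weighted base over $PS$. Let ${\it holds}_1, \ldots, {\it holds}_n$ be pairwise distinct symbols of $PS \setminus Var(W)$. Define $H = \{\langle \phi_i, +\infty\rangle \mid \langle \phi_i, +\infty\rangle \in W\}$ and $S = \{\langle {\it holds}_i \Rightarrow \phi_i, +\infty\rangle, \langle {\it holds}_i, k_i\rangle \mid \langle \phi_i, k_i\rangle \in W,\ k_i \neq +\infty\}$, and let $W{\downarrow} = H \cup S$. Then $W{\downarrow}$ is a weighted base in normal form. Moreover, $K_W(\alpha) = K_{W{\downarrow}}(\alpha)$ for every formula $\alpha \in PROP_{Var(W)}$, and hence $W{\downarrow}$ is $Var(W)$-equivalent to $W$.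
   Context: $PROP_{V}$ denotes the propositional formulas built from symbols in $V$, the constants $true,false$ and $\neg,\wedge,\vee$; $Var(\phi)$ is the set of symbols occurring in $\phi$. Worlds are the interpretations $\omega \in \Omega = 2^{PS}$. A weighted base is a finite set $W=\{\langle \phi_1,k_1\rangle,\ldots,\langle\phi_n,k_n\rangle\}$ where each $\phi_i\in PROP_{PS}$ and each weight $k_i$ is a positive integer or $+\infty$; $Var(W)=\bigcup_i Var(\phi_i)$. The weight of a world is $K_W(\omega)=\sum_{\langle\phi_i,k_i\rangle\in W,\ \omega\models\neg\phi_i} k_i$, and for a formula $\alpha$, $K_W(\alpha)=\min_{\omega\models\alpha}K_W(\omega)$. Skeptical inference: $\alpha \mid\!\sim_W \beta$ iff every world of minimal $K_W$-weight among the models of $\alpha$ is a model of $\beta$. $W$ is in normal form iff for every $i$, either $k_i=+\infty$ or $\phi_i$ is a propositional symbol. For $V\subseteq PS$, two weighted bases $W_1,W_2$ are $V$-equivalent iff for all $\alpha,\beta\in PROP_V$, $\alpha\mid\!\sim_{W_1}\beta$ holds exactly when $\alpha\mid\!\sim_{W_2}\beta$ holds. *)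

From Stdlib Require List.
From mathcomp Require Import all_boot.
Set Implicit Arguments. Unset Strict Implicit. Unset Printing Implicit Defensive.

Inductive xnat := XFin of nat | XInf.

Definition xadd (a b : xnat) : xnat :=
  match a, b with XFin m, XFin n => XFin (m + n) | _, _ => XInf end.
Definition xleb (a b : xnat) : bool :=
  match a, b with
  | _, XInf => true | XInf, XFin _ => false | XFin m, XFin n => (m <= n)%N end.
Definition xmin (a b : xnat) : xnat := if xleb a b then a else b.

Inductive form (PS : Type) :=
| FVar of PS | FTrue | FFalse
| FNot of form PS | FAnd of form PS & form PS | FOr of form PS & form PS.
Arguments FTrue {PS}. Arguments FFalse {PS}.

Definition FImp (PS : Type) (a b : form PS) : form PS := FOr (FNot a) b.

Fixpoint fvars (PS : Type) (f : form PS) : seq PS :=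
  match f with
  | FVar v => [:: v] | FTrue | FFalse => [::]
  | FNot g => fvars g
  | FAnd g h | FOr g h => fvars g ++ fvars h
  end.

Definition world (PS : finType) := {ffun PS -> bool}.

Fixpoint sat (PS : finType) (w : world PS) (f : form PS) : bool :=
  match f with
  | FVar v => w v | FTrue => true | FFalse => false
  | FNot g => ~~ sat w g
  | FAnd g h => sat w g && sat w h
  | FOr g h => sat w g || sat w h
  end.

Definition wbase (PS : Type) := seq (form PS * xnat).

Definition is_wbase (PS : Type) (W : wbase PS) : Prop :=
  forall p, List.In p W -> match p.2 with XFin k => (0 < k)%N | XInf => true end.

Definition varsW (PS : Type) (W : wbase PS) : seq PS := flatten [seq fvars p.1 | p <- W].

Definition in_prop (PS : eqType) (V : pred PS) (f : form PS) : Prop :=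
  forall v, v \in fvars f -> V v.

Definition Kw (PS : finType) (W : wbase PS) (w : world PS) : xnat :=
  foldr (fun p acc => if sat w p.1 then acc else xadd p.2 acc) (XFin 0) W.

Definition Kf (PS : finType) (W : wbase PS) (a : form PS) : xnat :=
  foldr xmin XInf [seq Kw W w | w <- enum {: world PS} & sat w a].

Definition infer (PS : finType) (W : wbase PS) (a b : form PS) : Prop :=
  forall w : world PS, sat w a -> Kw W w = Kf W a -> sat w b.

Definition normal_form (PS : Type) (W : wbase PS) : Prop :=
  forall p, List.In p W -> p.2 = XInf \/ exists v, p.1 = FVar v.

Definition V_equiv (PS : finType) (V : pred PS) (W1 W2 : wbase PS) : Prop :=
  forall a b : form PS, in_prop V a -> in_prop V b -> (infer W1 a b <-> infer W2 a b).

(* W-down = H u S, where holds i is the fresh symbol for the i-th element of W. *)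
Definition downW (PS : Type) (W : wbase PS) (holds : 'I_(size W) -> PS) : wbase PS :=
  [seq (p.1, XInf) | p <- W & if p.2 is XInf then true else false]
  ++ flatten [seq (let p := nth (FTrue, XInf) W i in
                   match p.2 with
                   | XInf => [::]
                   | XFin k => [:: (FImp (FVar (holds i)) p.1, XInf); (FVar (holds i), XFin k)]
                   end) | i : 'I_(size W) <- enum 'I_(size W)].
Arguments downW {PS} W holds.

(* Index by index, a world
   pays at least as much for the new entries as for <phi_i, k_i>: if phi_i fails,
   either holds_i fails (cost k_i) or the hard implication does.  Conversely,
   setting every fresh holds_i to the truth value of phi_i changes nothing on
   Var(W) and makes both costs equal.  So on Var(W)-formulas the minimal costs
   agree; then every preferred model of W↓ is a preferred model of W, and the
   extension of a preferred model of W is preferred for W↓, whence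
   Var(W)-equivalence. *)

From HB Require Import structures.
From Stdlib Require List.
From mathcomp Require Import all_boot.

Set Implicit Arguments. Unset Strict Implicit. Unset Printing Implicit Defensive.

Lemma xaddA : associative xadd.
Proof. by case=> [a|] [b|] [c|] //=; rewrite addnA. Qed.

Lemma xaddC : commutative xadd.
Proof. by case=> [a|] [b|] //=; rewrite addnC. Qed.

Lemma xadd0 : left_id (XFin 0) xadd.
Proof. by case. Qed.

HB.instance Definition _ := Monoid.isComLaw.Build xnat (XFin 0) xadd xaddA xaddC xadd0.

Lemma xleb_refl a : xleb a a.
Proof. by case: a => /=. Qed.

Lemma xleb_trans a b c : xleb a b -> xleb b c -> xleb a c.
Proof. by case: a b c => [a|] [b|] [c|] //=; apply: leq_trans. Qed.

Lemma xleb_anti a b : xleb a b -> xleb b a -> a = b.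
Proof. by case: a b => [a|] [b|] //= ab ba; rewrite (@anti_leq a b) ?ab. Qed.

Lemma xleb_total a b : xleb a b || xleb b a.
Proof. by case: a b => [a|] [b|] //=; apply: leq_total. Qed.

Lemma xleb_inf a : xleb a XInf.
Proof. by case: a. Qed.

Lemma xleb_add a b c d : xleb a b -> xleb c d -> xleb (xadd a c) (xadd b d).
Proof. by case: a b c d => [a|] [b|] [c|] [d|] //=; apply: leq_add. Qed.

Section FoldrMin.

Variables (T : eqType) (f : T -> xnat).

Lemma foldr_xmin_le s x : x \in s -> xleb (foldr xmin XInf (map f s)) (f x).
Proof.
elim: s => // y s IH; rewrite inE /= /xmin => /orP[/eqP <-|/IH le_x].
  case: ifP => [_|nle]; first exact: xleb_refl.
  by have := xleb_total (f x) (foldr xmin XInf (map f s)); rewrite nle.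
by case: ifP => // le_y; exact: xleb_trans le_y le_x.
Qed.

Lemma foldr_xmin_attained s :
  foldr xmin XInf (map f s) = XInf \/ exists2 x, x \in s & foldr xmin XInf (map f s) = f x.
Proof.
elim: s => [|y s [IH|[x xs IH]]] /=; [by left | | ]; rewrite /xmin; case: ifP => _;
  by [right; exists y; rewrite ?inE ?eqxx | left | right; exists x; rewrite // inE xs orbT].
Qed.

End FoldrMin.

Section Weights.

Variable PS : finType.
Implicit Types (W : wbase PS) (w : world PS) (a : form PS).

Lemma Kf_le_Kw W a w : sat w a -> xleb (Kf W a) (Kw W w).
Proof. by move=> aw; apply: foldr_xmin_le; rewrite mem_filter aw mem_enum. Qed.

Lemma Kf_attained W a : Kf W a = XInf \/ exists2 w, sat w a & Kf W a = Kw W w.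
Proof.
rewrite /Kf; have [->|[w]] := foldr_xmin_attained (Kw W) [seq w <- enum {: world PS} | sat w a].
  by left.
by rewrite mem_filter => /andP[aw _] ->; right; exists w.
Qed.

Lemma Kf_le_dominated W1 W2 a :
  (forall w, sat w a -> exists2 w', sat w' a & xleb (Kw W1 w') (Kw W2 w)) ->
  xleb (Kf W1 a) (Kf W2 a).
Proof.
move=> dom; have [->|[w aw ->]] := Kf_attained W2 a; first exact: xleb_inf.
by have [w' aw' le_w'] := dom w aw; exact: xleb_trans (Kf_le_Kw W1 aw') le_w'.
Qed.

Lemma sat_eq_on w1 w2 a :
  (forall v, v \in fvars a -> w1 v = w2 v) -> sat w1 a = sat w2 a.
Proof.
elim: a => [v|||a IH|a IHa b IHb|a IHa b IHb] //= eq12.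
- by rewrite eq12 ?inE.
- by rewrite IH.
- by rewrite IHa ?IHb // => v vb; rewrite eq12 // mem_cat vb ?orbT.
- by rewrite IHa ?IHb // => v vb; rewrite eq12 // mem_cat vb ?orbT.
Qed.

Definition cost w (p : form PS * xnat) : xnat := if sat w p.1 then XFin 0 else p.2.

Lemma Kw_big W w : Kw W w = \big[xadd/XFin 0]_(p <- W) cost w p.
Proof.
elim: W => [|p W IH]; first by rewrite big_nil.
by rewrite big_cons -IH /cost /=; case: ifP => // _; rewrite xadd0.
Qed.

Lemma Kw_cat W1 W2 w : Kw (W1 ++ W2) w = xadd (Kw W1 w) (Kw W2 w).
Proof. by rewrite !Kw_big big_cat. Qed.

Lemma Kw_flatten (Ws : seq (wbase PS)) w :
  Kw (flatten Ws) w = \big[xadd/XFin 0]_(W <- Ws) Kw W w.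
Proof.
elim: Ws => [|W Ws IH]; first by rewrite big_nil.
by rewrite big_cons /= Kw_cat IH.
Qed.

Lemma Kw_nth W w :
  Kw W w = \big[xadd/XFin 0]_(i < size W) cost w (nth (FTrue, XInf) W i).
Proof. by rewrite Kw_big (big_nth (FTrue, XInf)) big_mkord. Qed.

End Weights.

Section ConservativeExtension.

Variables (PS : finType) (V : pred PS) (W1 W2 : wbase PS) (ext : world PS -> world PS).

Hypothesis Kw_le : forall w, xleb (Kw W1 w) (Kw W2 w).
Hypothesis Kw_ext : forall w, Kw W2 (ext w) = Kw W1 w.
Hypothesis ext_on_V : forall w v, V v -> ext w v = w v.

Lemma sat_ext a w : in_prop V a -> sat (ext w) a = sat w a.
Proof. by move=> aV; apply: sat_eq_on => v /aV; exact: ext_on_V. Qed.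

Lemma Kf_conservative a : in_prop V a -> Kf W1 a = Kf W2 a.
Proof.
move=> aV; apply: xleb_anti; apply: Kf_le_dominated => w aw.
  by exists w.
by exists (ext w); rewrite ?sat_ext ?Kw_ext ?xleb_refl.
Qed.

Lemma V_equiv_conservative : V_equiv V W1 W2.
Proof.
move=> a b aV bV; split=> inf12 w aw Kw_min.
  apply: inf12 => //; apply: xleb_anti; last exact: Kf_le_Kw.
  by rewrite Kf_conservative // -Kw_min.
rewrite -(sat_ext w bV); apply: inf12; first by rewrite sat_ext.
by rewrite Kw_ext Kw_min Kf_conservative.
Qed.

End ConservativeExtension.

Definition pos_weight (PS : Type) (p : form PS * xnat) : bool :=
  if p.2 is XFin k then 0 < k else true.

Definition normal_entry (PS : Type) (p : form PS * xnat) : bool :=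
  if p.2 is XFin _ then (if p.1 is FVar _ then true else false) else true.

Lemma is_wbaseE (PS : Type) (W : wbase PS) : is_wbase W <-> all (@pos_weight PS) W.
Proof. exact: iff_sym (List.forallb_forall _ W). Qed.

Lemma normal_form_all (PS : Type) (W : wbase PS) :
  all (@normal_entry PS) W -> normal_form W.
Proof.
move/List.forallb_forall=> nW [phi [k|]] /nW; last by left.
by case: phi => // v _; right; exists v.
Qed.

Lemma varsW_nth (PS : eqType) (W : wbase PS) i v :
  i < size W -> v \in fvars (nth (FTrue, XInf) W i).1 -> v \in varsW W.
Proof.
elim: W i => [|p W IH] [|i] //= lt_i v_i; rewrite /varsW /= mem_cat ?v_i //.
by rewrite (IH i) ?orbT.
Qed.

Section DownW.

Variables (PS : finType) (W : wbase PS) (holds : 'I_(size W) -> PS).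

Local Notation entry i := (nth (FTrue, XInf) W i).

Definition down_cost (w : world PS) (i : 'I_(size W)) : xnat :=
  match entry i with
  | (phi, XInf) => cost w (phi, XInf)
  | (phi, XFin k) =>
      xadd (cost w (FImp (FVar (holds i)) phi, XInf)) (cost w (FVar (holds i), XFin k))
  end.

Lemma Kw_downW w : Kw (downW W holds) w = \big[xadd/XFin 0]_(i < size W) down_cost w i.
Proof.
rewrite /downW Kw_cat Kw_flatten big_map big_enum /= Kw_big big_map big_filter big_mkcond.
rewrite (big_nth (FTrue, XInf)) big_mkord -big_split; apply: eq_bigr => i _.
rewrite /down_cost; case: (entry i) => phi [k|] /=; last by rewrite xaddC xadd0.
by rewrite /cost /=; case: (w (holds i)); case: (sat w phi); rewrite /= ?addn0.
Qed.

Lemma Kw_le_downW w : xleb (Kw W w) (Kw (downW W holds) w).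
Proof.
rewrite Kw_nth Kw_downW; apply: (big_ind2 xleb) => [|? ? ? ?|i _].
- exact: xleb_refl.
- exact: xleb_add.
rewrite /down_cost; case: (entry i) => phi [k|] /=; last exact: xleb_refl.
by rewrite /cost /=; case: (w (holds i)); case: (sat w phi); rewrite /= ?addn0.
Qed.

Lemma downW_entries :
  all (@pos_weight PS) W -> all (predI (@pos_weight PS) (@normal_entry PS)) (downW W holds).
Proof.
move=> /(all_nthP (FTrue, XInf)) posW; rewrite all_cat all_mapT //=.
elim: (enum _) => //= i s IH; rewrite all_cat IH andbT.
by move: (posW i (ltn_ord i)); case: (entry i) => phi [k|] //; rewrite /pos_weight /= => ->.
Qed.

Hypothesis holds_inj : injective holds.
Hypothesis holds_fresh : forall i, holds i \notin varsW W.

Definition mark_holds (w : world PS) : world PS :=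
  [ffun v => if [pick i | holds i == v] is Some i then sat w (entry i).1 else w v].

Lemma mark_holds_holds w i : mark_holds w (holds i) = sat w (entry i).1.
Proof.
rewrite ffunE; case: pickP => [j /eqP/holds_inj -> //|/(_ i)].
by rewrite eqxx.
Qed.

Lemma mark_holds_varsW w v : v \in varsW W -> mark_holds w v = w v.
Proof.
move=> vW; rewrite ffunE; case: pickP => [j /eqP holds_j|//].
by have := holds_fresh j; rewrite holds_j vW.
Qed.

Lemma Kw_downW_mark w : Kw (downW W holds) (mark_holds w) = Kw W w.
Proof.
rewrite Kw_downW Kw_nth; apply: eq_bigr => i _.
have sat_i : sat (mark_holds w) (entry i).1 = sat w (entry i).1.
  by apply: sat_eq_on => v v_i; rewrite mark_holds_varsW // (varsW_nth (ltn_ord i)).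
have := mark_holds_holds w i; rewrite /down_cost.
case: (entry i) sat_i => phi [k|] /= sat_i holds_i; rewrite /cost /= sat_i ?holds_i //.
by case: (sat w phi); rewrite /= ?addn0.
Qed.

End DownW.

Theorem proposition3p1 (PS : finType) (W : wbase PS) (holds : 'I_(size W) -> PS) :
  is_wbase W ->
  injective holds ->
  (forall i, holds i \notin varsW W) ->
  [/\ is_wbase (downW W holds),
      normal_form (downW W holds),
      (forall a : form PS, in_prop (fun v => v \in varsW W) a ->
         Kf W a = Kf (downW W holds) a)
    & V_equiv (fun v => v \in varsW W) W (downW W holds)].
Proof.
move=> /is_wbaseE posW holds_inj holds_fresh.
have entries := downW_entries holds posW.
have Kw_le := Kw_le_downW holds.
have Kw_mark := Kw_downW_mark holds_inj holds_fresh.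
have mark_on_V := mark_holds_varsW holds_fresh.
split.
- by apply/is_wbaseE; apply: sub_all entries => p /andP[].
- by apply: normal_form_all; apply: sub_all entries => p /andP[].
- exact: Kf_conservative Kw_le Kw_mark mark_on_V.
- exact: V_equiv_conservative Kw_le Kw_mark mark_on_V.
Qed.
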